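(* Let $n>24$, $\epsilon>0$, $L>9$, and $m=Ln$ (assumed to be an integer). Let $v=(v_1,\dots,v_n)$ with $v_i\ge0$ and $\sum_i v_i=1$. Then $$\mathsf P\left\{\mathrm{AST}(v,x)\le L\,n\,\|v\|\,\|p\|\,(1+8\epsilon)+1\right\}\ \ge\ 1-\frac{10}{9}e^{-L\epsilon^2}.$$
   Context: Standing setup: $U$ is a finite set (the key space) with a probability measure $q$; $T=\{1,\dots,n\}$; $h:U\to T$ is an arbitrary function. $p_i=\sum_{u\in h^{-1}(i)}q(u)$ and $\|p\|^2=\sum_{i=1}^n p_i^2$. $U^m$ carries the product measure $q^m$, and $\mathsf P$ denotes probability under $q^m$ for $x=(x_1,\dots,x_m)\in U^m$. $k_i(x)=|\{j: h(x_j)=i\}|$. $\|\cdot\|$ is the euclidean norm. The vector $v$ is a user's access pattern ($v_i$ = fraction of the user's searches directed to slot $i$). $\mathrm{AST}(v,x)$ denotes the average search time of such a user in a hash table with chaining after the keys $x$ have been inserted; in this model it satisfies $\mathrm{AST}(v,x)\le\sum_{i=1}^n v_i\,k_i(x)$. *)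

From mathcomp Require Import all_boot all_order all_algebra.
From mathcomp Require Import reals.
From mathcomp Require Import sequences exp.
Set Implicit Arguments. Unset Strict Implicit. Unset Printing Implicit Defensive.
Import Order.TTheory GRing.Theory Num.Theory.
Local Open Scope ring_scope.

Definition is_prob (R : realType) (U : finType) (q : U -> R) : Prop :=
  (forall u, 0 <= q u) /\ \sum_(u : U) q u = 1.

Definition pslot (R : realType) (U : finType) (n : nat) (q : U -> R)
  (h : U -> 'I_n) (i : 'I_n) : R := \sum_(u : U | h u == i) q u.

Definition enorm (R : realType) (n : nat) (f : 'I_n -> R) : R :=
  Num.sqrt (\sum_(i < n) f i ^+ 2).

Definition kcount (U : finType) (n m : nat) (h : U -> 'I_n)
  (x : {ffun 'I_m -> U}) (i : 'I_n) : nat := #|[set j : 'I_m | h (x j) == i]|.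

Definition Pm (R : realType) (U : finType) (m : nat) (q : U -> R)
  (E : pred {ffun 'I_m -> U}) : R :=
  \sum_(x : {ffun 'I_m -> U} | E x) \prod_(j < m) q (x j).

From mathcomp Require Import all_boot all_order all_algebra.
From mathcomp Require Import reals.
From mathcomp Require Import sequences exp.
From mathcomp Require Import ring lra.
Set Implicit Arguments. Unset Strict Implicit. Unset Printing Implicit Defensive.
Import Order.TTheory GRing.Theory Num.Theory.
Local Open Scope ring_scope.

(* Since [AST x <= \sum_j v (h (x j))], it suffices to bound the upper tail of a
   sum of [m] i.i.d. terms, each in [[0, |v|]], with mean [\sum_i v_i p_i <= |v| |p|]
   by Cauchy-Schwarz.  If [|p| (1 + 8 eps) >= 1] the sum never exceeds [m |v|] and
   the event is sure.  Otherwise [n |p| > 1 + 8 eps], because [n |p|^2 >= (\sum_i p_i)^2 = 1],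
   and the Chernoff bound with parameter [s / |v|], [s = 2 eps / (1 + 2 eps)], together
   with [expR z <= 1 + z expR s] on [[0, s]] and [expR s <= 1 + 2 eps], bounds the tail
   by [expR (- L eps^2)]. *)

Section EuclideanNorm.
Variables (R : realType) (n : nat).
Implicit Types f g : 'I_n -> R.

Lemma sqr_sum_mul_le f g :
  (\sum_(i < n) f i * g i) ^+ 2 <= (\sum_(i < n) f i ^+ 2) * (\sum_(i < n) g i ^+ 2).
Proof.
set A := \sum_(i < n) f i ^+ 2; set B := \sum_(i < n) g i ^+ 2.
set C := \sum_(i < n) f i * g i.
have B0 : 0 <= B by apply: sumr_ge0 => i _; exact: sqr_ge0.
have quad : 0 <= B * (A * B - C ^+ 2).
  have -> : B * (A * B - C ^+ 2) = \sum_(i < n) (B * f i - C * g i) ^+ 2.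
    rewrite [RHS](eq_bigr (fun i => B ^+ 2 * f i ^+ 2 - 2 * B * C * (f i * g i)
                                    + C ^+ 2 * g i ^+ 2)) => [|i _]; last by ring.
    by rewrite !big_split /= sumrN -!mulr_sumr -/A -/B -/C; ring.
  by apply: sumr_ge0 => i _; exact: sqr_ge0.
have [B_eq0|B_neq0] := eqVneq B 0.
  have g0 i : g i = 0.
    apply/eqP; rewrite -sqrf_eq0; apply/eqP/le_anti; rewrite sqr_ge0 andbT -B_eq0.
    by rewrite /B (bigD1 i) //= lerDl; apply: sumr_ge0 => j _; exact: sqr_ge0.
  rewrite /C big1 => [|i _]; last by rewrite g0 mulr0.
  by rewrite B_eq0 mulr0 expr0n.
have B_gt0 : 0 < B by rewrite lt_def B_neq0.
by move: quad; rewrite pmulr_rge0 // subr_ge0.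
Qed.

Lemma enorm_ge0 f : 0 <= enorm f.
Proof. exact: sqrtr_ge0. Qed.

Lemma sqr_enorm f : enorm f ^+ 2 = \sum_(i < n) f i ^+ 2.
Proof. by rewrite sqr_sqrtr //; apply: sumr_ge0 => i _; exact: sqr_ge0. Qed.

Lemma sum_mul_le_enorm f g : \sum_(i < n) f i * g i <= enorm f * enorm g.
Proof.
apply: le_trans (ler_norm _) _.
rewrite -ler_sqr ?nnegrE ?mulr_ge0 ?enorm_ge0 // exprMn !sqr_enorm real_normK ?num_real //.
exact: sqr_sum_mul_le.
Qed.

Lemma le_enorm f i : 0 <= f i -> f i <= enorm f.
Proof.
move=> fi0; rewrite -ler_sqr ?nnegrE ?enorm_ge0 // sqr_enorm (bigD1 i) //= lerDl.
by apply: sumr_ge0 => j _; exact: sqr_ge0.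
Qed.

Lemma enorm_gt0 f : (forall i, 0 <= f i) -> 0 < \sum_(i < n) f i -> 0 < enorm f.
Proof.
move=> f_ge0 sum_gt0; rewrite lt_def enorm_ge0 andbT; apply: contraTneq sum_gt0 => f0.
by rewrite -leNgt; apply: sumr_le0 => i _; rewrite -f0 le_enorm.
Qed.

Lemma sqr_sum_le_card_sqr_enorm f : (\sum_(i < n) f i) ^+ 2 <= n%:R * enorm f ^+ 2.
Proof.
have := sqr_sum_mul_le f (fun=> 1); rewrite sqr_enorm mulrC.
by under eq_bigr do rewrite mulr1; rewrite sumr_const card_ord expr1n.
Qed.

End EuclideanNorm.

Lemma mul1B_expR_le1 (R : realType) (s : R) : (1 - s) * expR s <= 1.
Proof.
by have := expR_ge1Dx (- s); rewrite expRN -div1r ler_pdivlMr ?expR_gt0 // addrC.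
Qed.

Lemma expR_le_inv1B (R : realType) (s : R) : s < 1 -> expR s <= (1 - s)^-1.
Proof.
by move=> s1; rewrite -div1r ler_pdivlMr ?subr_gt0 // mulrC mul1B_expR_le1.
Qed.

Lemma expR_le1D_mul (R : realType) (z s : R) :
  0 <= z -> z <= s -> expR z <= 1 + z * expR s.
Proof.
move=> z0 zs; have := mul1B_expR_le1 z.
rewrite mulrBl mul1r lerBlDr => /le_trans; apply.
by rewrite lerD2l ler_wpM2l // ler_expR.
Qed.

Lemma chernoff_exponent_le (R : realType) (L n eps c P a s : R) :
  0 < eps -> 0 <= L -> 0 <= n -> 0 < c -> 0 <= a -> a <= c * P ->
  1 + 8 * eps <= n * P ->
  s * (1 + 2 * eps) = 2 * eps -> expR s <= 1 + 2 * eps ->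
  L * n * (s / c * expR s * a) - s / c * (L * n * c * P * (1 + 8 * eps) + 1)
    <= - (L * eps ^+ 2).
Proof.
move=> e0 L0 n0 c0 a0 acP nP hs es.
have s0 : 0 < s by rewrite -(@pmulr_lgt0 _ (1 + 2 * eps)) ?hs; lra.
have aP : a / c <= P by rewrite ler_pdivrMr // mulrC.
have sc0 : 0 <= s / c by rewrite divr_ge0 // ltW.
have es_gt0 : 0 < expR s := expR_gt0 s.
have -> : L * n * (s / c * expR s * a) - s / c * (L * n * c * P * (1 + 8 * eps) + 1)
  = L * n * s * (expR s * (a / c) - P * (1 + 8 * eps)) - s / c.
  by field; rewrite lt0r_neq0.
set x := a / c; set e := expR s.
have x0 : 0 <= x by rewrite divr_ge0 // ltW.
have ex : e * x <= (1 + 2 * eps) * P by apply: ler_pM; rewrite // ltW.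
have gap : e * x - P * (1 + 8 * eps) <= - (6 * eps * P) by lra.
have snP : 2 * eps <= s * (n * P) by rewrite -hs ler_wpM2l ?ltW //; lra.
have LeS : L * eps ^+ 2 <= 6 * eps * L * (s * (n * P)).
  have := mulr_ge0 (ltW e0) L0; rewrite -subr_ge0 in snP; nra.
have : L * n * s * (e * x - P * (1 + 8 * eps)) <= L * n * s * (- (6 * eps * P)).
  by apply: ler_wpM2l gap; rewrite !mulr_ge0 // ltW.
nra.
Qed.

Lemma sum_ffun_prod (R : realType) (U : finType) (m : nat) (g : U -> R) :
  \sum_(x : {ffun 'I_m -> U}) \prod_(j < m) g (x j) = (\sum_u g u) ^+ m.
Proof.
rewrite -(bigA_distr_bigA (fun (_ : 'I_m) (u : U) => g u)) /=.
by rewrite prodr_const card_ord.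
Qed.

Section ProductMeasure.
Variables (R : realType) (U : finType) (m : nat) (q : U -> R).
Hypothesis q_ge0 : forall u, 0 <= q u.

Let weight_ge0 (x : {ffun 'I_m -> U}) : 0 <= \prod_(j < m) q (x j).
Proof. exact: prodr_ge0. Qed.

Lemma le_Pm (E F : pred {ffun 'I_m -> U}) :
  (forall x, E x -> F x) -> Pm q E <= Pm q F.
Proof.
move=> EF; rewrite /Pm [X in _ <= X](bigID E) /=.
have -> : \sum_(x | F x && E x) \prod_(j < m) q (x j) = Pm q E.
  by apply: eq_bigl => x; apply/andb_idl/EF.
by rewrite lerDl; apply: sumr_ge0.
Qed.

Lemma Pm_sum_gt_le (f : U -> R) (t T : R) : 0 <= t ->
  Pm q (fun x => T < \sum_(j < m) f (x j))
    <= expR (- (t * T)) * (\sum_u q u * expR (t * f u)) ^+ m.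
Proof.
move=> t0; set S := fun x : {ffun 'I_m -> U} => \sum_(j < m) f (x j).
have -> : expR (- (t * T)) * (\sum_u q u * expR (t * f u)) ^+ m
    = \sum_(x : {ffun 'I_m -> U}) \prod_(j < m) q (x j) * expR (t * (S x - T)).
  rewrite -sum_ffun_prod mulr_sumr; apply: eq_bigr => x _.
  by rewrite big_split /= -expR_sum -mulr_sumr mulrBr addrC expRD; ring.
apply: le_trans (_ : \sum_(x | T < S x) \prod_(j < m) q (x j) * expR (t * (S x - T)) <= _).
  apply: ler_sum => x /ltW; rewrite -[_ <= _]subr_ge0 => gap.
  apply: ler_peMr => //; apply: le_trans (expR_ge1Dx _).
  by rewrite lerDl mulr_ge0.
rewrite [X in _ <= X](bigID (fun x => T < S x)) /= lerDl.
by apply: sumr_ge0 => x _; rewrite mulr_ge0 ?expR_ge0.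
Qed.

Hypothesis q_sum1 : \sum_u q u = 1.

Lemma PmC (E : pred {ffun 'I_m -> U}) : Pm q E = 1 - Pm q (predC E).
Proof.
by rewrite -(expr1n _ m) -q_sum1 -sum_ffun_prod (bigID E) /= addrK.
Qed.

Lemma sum_mul_expR_le (g : U -> R) (s : R) : (forall u, 0 <= g u <= s) ->
  \sum_u q u * expR (g u) <= expR (expR s * \sum_u q u * g u).
Proof.
move=> g_bd; apply: le_trans (expR_ge1Dx _).
apply: le_trans (_ : \sum_u q u * (1 + g u * expR s) <= _).
  apply: ler_sum => u _; case/andP: (g_bd u) => g0 gs.
  by rewrite ler_wpM2l // expR_le1D_mul.
rewrite mulr_sumr (eq_bigr (fun u => q u + expR s * (q u * g u))) => [|u _]; last by ring.
by rewrite big_split /= q_sum1 -mulr_sumr.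
Qed.

End ProductMeasure.

Section Hashing.
Variables (R : realType) (U : finType) (n : nat) (h : U -> 'I_n) (v : 'I_n -> R).

Lemma sum_mul_kcount m (x : {ffun 'I_m -> U}) :
  \sum_(i < n) v i * (kcount h x i)%:R = \sum_(j < m) v (h (x j)).
Proof.
rewrite [RHS](partition_big (fun j => h (x j)) predT) //=.
apply: eq_bigr => i _; rewrite (eq_bigr (fun=> v i)) => [|j /eqP <- //].
by rewrite sumr_const mulr_natr /kcount cardsE.
Qed.

Lemma sum_mul_pslot (q : U -> R) :
  \sum_(i < n) v i * pslot q h i = \sum_u q u * v (h u).
Proof.
rewrite [RHS](partition_big h predT) //=; apply: eq_bigr => i _.
by rewrite /pslot mulr_sumr; apply: eq_bigr => u /eqP <-; rewrite mulrC.
Qed.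

Lemma sum_pslot (q : U -> R) : \sum_(i < n) pslot q h i = \sum_u q u.
Proof. by rewrite [RHS](partition_big h predT). Qed.

End Hashing.

Lemma one_le_card_sqr_enorm_pslot (R : realType) (U : finType) (n : nat)
    (q : U -> R) (h : U -> 'I_n) :
  is_prob q -> 1 <= n%:R * enorm (pslot q h) ^+ 2.
Proof.
case=> _ q_sum1; have := sqr_sum_le_card_sqr_enorm (pslot q h).
by rewrite sum_pslot q_sum1 expr1n.
Qed.

Lemma load_tail_le_chernoff (R : realType) (U : finType) (q : U -> R) (n m : nat)
    (h : U -> 'I_n) (L eps : R) (v : 'I_n -> R) :
  is_prob q -> 0 < eps -> 0 <= L -> m%:R = L * n%:R ->
  (forall i, 0 <= v i) -> \sum_(i < n) v i = 1 ->
  1 + 8 * eps <= n%:R * enorm (pslot q h) ->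
  Pm q (fun x => L * n%:R * enorm v * enorm (pslot q h) * (1 + 8 * eps) + 1
                 < \sum_(j < m) v (h (x j)))
    <= expR (- (L * eps ^+ 2)).
Proof.
move=> [q_ge0 q_sum1] e0 L0 hm v_ge0 v_sum1 nP.
set c := enorm v; set P := enorm (pslot q h).
set T := L * n%:R * c * P * (1 + 8 * eps) + 1.
have c_gt0 : 0 < c by apply: enorm_gt0; rewrite // v_sum1 ltr01.
(* [s] is chosen so that [expR s <= (1 - s)^-1 = 1 + 2 eps] *)
set s := 2 * eps / (1 + 2 * eps); set t := s / c.
have s_def : s * (1 + 2 * eps) = 2 * eps by rewrite /s mulfVK // lt0r_neq0 //; lra.
have s_gt0 : 0 < s by rewrite /s divr_gt0 //; lra.
have es : expR s <= 1 + 2 * eps.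
  have -> : 1 + 2 * eps = (1 - s)^-1 by rewrite /s; field; lra.
  by apply: expR_le_inv1B; rewrite /s ltr_pdivrMr; lra.
have t_gt0 : 0 < t by rewrite divr_gt0.
have tv u : 0 <= t * v (h u) <= s.
  apply/andP; split; first by rewrite mulr_ge0 // ltW.
  by rewrite /t mulrAC ler_pdivrMr // ler_wpM2l ?le_enorm // ltW.
set a := \sum_u q u * v (h u).
have a_ge0 : 0 <= a by rewrite sumr_ge0 // => u _; rewrite mulr_ge0.
have a_le : a <= c * P by rewrite /a -sum_mul_pslot; exact: sum_mul_le_enorm.
apply: le_trans (Pm_sum_gt_le m q_ge0 (fun u => v (h u)) T (ltW t_gt0)) _.
apply: le_trans (_ : expR (- (t * T)) * expR (expR s * \sum_u q u * (t * v (h u))) ^+ m <= _).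
  rewrite ler_wpM2l ?expR_ge0 // lerXn2r ?nnegrE ?expR_ge0 ?sum_mul_expR_le //.
  by rewrite sumr_ge0 // => u _; rewrite mulr_ge0 ?expR_ge0.
rewrite -expRM_natl -expRD ler_expR hm.
have -> : \sum_u q u * (t * v (h u)) = t * a.
  by rewrite /a mulr_sumr; apply: eq_bigr => u _; ring.
have -> : - (t * T) + L * n%:R * (expR s * (t * a))
    = L * n%:R * (s / c * expR s * a) - s / c * T by rewrite /t; ring.
exact: chernoff_exponent_le.
Qed.

Lemma load_tail_le (R : realType) (U : finType) (q : U -> R) (n m : nat)
    (h : U -> 'I_n) (L eps : R) (v : 'I_n -> R) :
  is_prob q -> 0 < eps -> 0 <= L -> m%:R = L * n%:R ->
  (forall i, 0 <= v i) -> \sum_(i < n) v i = 1 ->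
  Pm q (fun x => L * n%:R * enorm v * enorm (pslot q h) * (1 + 8 * eps) + 1
                 < \sum_(j < m) v (h (x j)))
    <= expR (- (L * eps ^+ 2)).
Proof.
move=> hq e0 L0 hm v_ge0 v_sum1.
set c := enorm v; set P := enorm (pslot q h).
have P_ge0 : 0 <= P := enorm_ge0 _.
have [sure|P_small] := lerP 1 (P * (1 + 8 * eps)); last first.
  apply: load_tail_le_chernoff => //.
  have := one_le_card_sqr_enorm_pslot h hq; rewrite -/P; nra.
rewrite /Pm big_pred0 ?expR_ge0 // => x; apply/negbTE; rewrite -leNgt.
apply: le_trans (_ : \sum_(j < m) c <= _); first by apply: ler_sum => j _; apply: le_enorm.
rewrite sumr_const card_ord -[c *+ m]mulr_natr hm ler_wpDr //.
have : 0 <= c * (L * n%:R) by rewrite !mulr_ge0 // enorm_ge0.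
nra.
Qed.

Theorem corollary5 (R : realType) (U : finType) (q : U -> R) (n m : nat)
  (h : U -> 'I_n) (L eps : R) (v : 'I_n -> R)
  (AST : {ffun 'I_m -> U} -> R) :
  is_prob q ->
  (24 < n)%N -> 0 < eps -> 9 < L -> m%:R = L * n%:R ->
  (forall i, 0 <= v i) -> \sum_(i < n) v i = 1 ->
  (forall x, AST x <= \sum_(i < n) v i * (kcount h x i)%:R) ->
  1 - 10 / 9 * expR (- (L * eps ^+ 2)) <=
  Pm q (fun x => AST x <=
         L * n%:R * enorm v * enorm (pslot q h) * (1 + 8 * eps) + 1).
Proof.
(* [24 < n] and [9 < L] only serve the paper's constant [10 / 9]; [0 <= L] suffices here. *)
move=> hq _ e0 L9 hm v_ge0 v_sum1 AST_le; have [q_ge0 q_sum1] := hq.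
set T := _ + 1; set K := expR _.
have L_ge0 : 0 <= L by lra.
have fail_le : Pm q (predC (fun x => AST x <= T)) <= K.
  apply: le_trans (load_tail_le h hq e0 L_ge0 hm v_ge0 v_sum1).
  apply: le_Pm => // x; rewrite /= -ltNge => /lt_le_trans; apply.
  by rewrite -(sum_mul_kcount h).
have K_ge0 : 0 <= K := expR_ge0 _.
by rewrite PmC //; lra.
Qed.
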